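(* Let $E$ be an approximation space having a well-orderable topological basis (in particular, any approximation space with a countable basis). Then the intersection of countably many dense $\mathbf{\Pi}^0_2(E)$ subsets of $E$ is dense in $E$.
   Context: Approximation relation: a binary relation $\ll$ on a topological basis $\mathcal{B}$ of $E$ such that for all $U,V,T\in\mathcal{B}$: (1) $U\ll V\Rightarrow V\subseteq U$; (2) $U\subseteq T$ and $U\ll V$ imply $T\ll V$; (3) for every $x\in U$ there is $W\in\mathcal{B}$ with $x\in W$ and $U\ll W$; (4) every sequence $(U_i)_{i\in\mathbb{N}}$ in $\mathcal{B}$ with $U_i\ll U_{i+1}$ for all $i$ has $\bigcap_iU_i\ne\emptyset$. An approximation space is a space admitting such a relation. Borel classes in a general topological space: $\mathbf{\Sigma}^0_2(E)$ is the family of countable unions of sets $U\setminus V$ with $U,V$ open (equivalently, countable unions of Boolean combinations of open sets); $\mathbf{\Pi}^0_2(E)$ is the family of complements of $\mathbf{\Sigma}^0_2(E)$ sets. *)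

From Stdlib Require Import Classical.

Definition set (E : Type) := E -> Prop.
Definition subset {E} (U V : set E) : Prop := forall x, U x -> V x.

Record topology (E : Type) := Topology {
  is_open : set E -> Prop;
  open_full : is_open (fun _ => True);
  open_union : forall F : set E -> Prop,
      (forall U, F U -> is_open U) -> is_open (fun x => exists U, F U /\ U x);
  open_inter : forall U V, is_open U -> is_open V -> is_open (fun x => U x /\ V x)
}.
Arguments is_open {E} t U.

Definition is_basis {E} (t : topology E) (B : set E -> Prop) : Prop :=
  (forall U, B U -> is_open t U) /\
  (forall U x, is_open t U -> U x -> exists V, B V /\ V x /\ subset V U).

Definition approximation_relation {E} (B : set E -> Prop)
    (ll : set E -> set E -> Prop) : Prop :=
  (forall U V, B U -> B V -> ll U V -> subset V U) /\
  (forall U V T, B U -> B V -> B T -> subset U T -> ll U V -> ll T V) /\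
  (forall U x, B U -> U x -> exists W, B W /\ W x /\ ll U W) /\
  (forall Us : nat -> set E, (forall i, B (Us i)) ->
      (forall i, ll (Us i) (Us (S i))) -> exists x, forall i, Us i x).

Definition approximation_space {E} (t : topology E) : Prop :=
  exists B ll, is_basis t B /\ approximation_relation B ll.

Definition well_orderable {E} (S : set E -> Prop) : Prop :=
  exists R : set E -> set E -> Prop,
    (forall U, S U -> ~ R U U) /\
    (forall U V W, S U -> S V -> S W -> R U V -> R V W -> R U W) /\
    (forall U V, S U -> S V -> R U V \/ U = V \/ R V U) /\
    (forall P : set E -> Prop, (forall U, P U -> S U) -> (exists U, P U) ->
        exists U, P U /\ forall V, P V -> ~ R V U).

Definition Sigma02 {E} (t : topology E) (A : set E) : Prop :=
  exists Us Vs : nat -> set E,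
    (forall n, is_open t (Us n) /\ is_open t (Vs n)) /\
    (forall x, A x <-> exists n, Us n x /\ ~ Vs n x).

Definition Pi02 {E} (t : topology E) (A : set E) : Prop :=
  exists S, Sigma02 t S /\ forall x, A x <-> ~ S x.

Definition dense {E} (t : topology E) (D : set E) : Prop :=
  forall U, is_open t U -> (exists x, U x) -> exists x, U x /\ D x.

From Stdlib Require Import Classical ClassicalEpsilon Cantor.

(* This is a Baire category theorem for approximation spaces.
   Call a set C "open-dense" when every nonempty open set W contains a nonempty
   open subset of C, i.e. C has dense interior.
   - A dense Pi^0_2 set A is the intersection of the sets ~(U_m \ V_m) coming
     from a Sigma^0_2 presentation of its complement, and each of these is
     open-dense: inside W, either W misses U_m, or some point of A lies in
     W /\ U_m, hence in V_m, and W /\ V_m is a nonempty open subset.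
   - Re-indexing by the Cantor pairing of nat * nat, the intersection of all
     A n is the intersection of one sequence (G k) of open-dense sets.
   - Baire property: given a nonempty open U, pick a nonempty basic W_0 inside
     U /\ G 0, and repeatedly a nonempty basic W_{k+1} inside G (k+1) with
     W_k << W_{k+1}.  Axiom (4) of approximation relations yields a point in
     every W_k, hence in U and in every G k.  The sequence is obtained by a
     dependent-choice lemma. *)

Definition open_dense {E} (t : topology E) (C : set E) : Prop :=
  forall W, is_open t W -> (exists x, W x) ->
    exists V, is_open t V /\ (exists x, V x) /\ subset V W /\ subset V C.

Definition co_difference {E} (U V : set E) : set E := fun x => ~ (U x /\ ~ V x).

Lemma dependent_choice {X : Type} (P : X -> Prop) (R : nat -> X -> X -> Prop) :
  (forall k x, P x -> exists y, P y /\ R k x y) ->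
  forall x0, P x0 ->
    exists f : nat -> X, f 0 = x0 /\ forall n, P (f n) /\ R n (f n) (f (S n)).
Proof.
  intros Hstep x0 Hx0.
  set (next k x := epsilon (inhabits x) (fun y => P y /\ R k x y)).
  assert (Hnext : forall k x, P x -> P (next k x) /\ R k x (next k x)).
  { intros k x Hx. apply epsilon_spec, Hstep, Hx. }
  set (f := fix f n := match n with 0 => x0 | S k => next k (f k) end).
  assert (HP : forall n, P (f n)).
  { induction n as [|n IH]; [exact Hx0 | apply (Hnext n _ IH)]. }
  exists f. split; [reflexivity|].
  intro n. split; [apply HP | apply (Hnext n _ (HP n))].
Qed.

Lemma countable_intersections_merge {E} (Q : set E -> Prop) (A : nat -> set E) :
  (forall n, exists Cs : nat -> set E,
      (forall m, Q (Cs m)) /\ forall x, A n x <-> forall m, Cs m x) ->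
  exists G : nat -> set E,
    (forall k, Q (G k)) /\ forall x, (forall n, A n x) <-> forall k, G k x.
Proof.
  intro HA.
  set (Cs n := proj1_sig (constructive_indefinite_description _ (HA n))).
  assert (HCs : forall n, (forall m, Q (Cs n m)) /\
                          forall x, A n x <-> forall m, Cs n m x).
  { intro n. exact (proj2_sig (constructive_indefinite_description _ (HA n))). }
  exists (fun k => Cs (fst (of_nat k)) (snd (of_nat k))). split.
  - intro k. apply HCs.
  - intro x. split.
    + intros Hx k. apply HCs, Hx.
    + intros Hx n. apply HCs. intro m.
      specialize (Hx (to_nat (n, m))). rewrite cancel_of_to in Hx. exact Hx.
Qed.

Section OpenDenseFromPi02.
Context {E : Type} (t : topology E).

Lemma co_difference_open_dense (D U V : set E) :
  dense t D -> is_open t U -> is_open t V ->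
  subset D (co_difference U V) -> open_dense t (co_difference U V).
Proof.
  intros HD HU HV HDsub W HW [w Ww].
  destruct (classic (exists y, W y /\ U y)) as [HWU | HWU].
  - destruct (HD _ (open_inter _ t _ _ HW HU) HWU) as [x [[Wx Ux] Dx]].
    assert (Vx : V x) by (apply NNPP; intro nVx; exact (HDsub x Dx (conj Ux nVx))).
    exists (fun z => W z /\ V z). repeat split.
    + apply open_inter; assumption.
    + exists x; split; assumption.
    + intros z [Wz _]; exact Wz.
    + intros z [_ Vz] [_ nVz]; exact (nVz Vz).
  - exists W. repeat split; [exact HW | exists w; exact Ww | intros z Wz; exact Wz |].
    intros z Wz [Uz _]. apply HWU. exists z; split; assumption.
Qed.

Lemma dense_Pi02_open_dense_intersection (A : set E) :
  Pi02 t A -> dense t A ->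
  exists Cs : nat -> set E,
    (forall m, open_dense t (Cs m)) /\ forall x, A x <-> forall m, Cs m x.
Proof.
  intros [S [[Us [Vs [Hopen HS]]] HA]] Hdense.
  assert (HAiff : forall x, A x <-> forall m, co_difference (Us m) (Vs m) x).
  { intro x. rewrite HA, HS. unfold co_difference. split.
    - intros h m hm. apply h. exists m. exact hm.
    - intros h [m hm]. exact (h m hm). }
  exists (fun m => co_difference (Us m) (Vs m)). split; [|exact HAiff].
  intro m. destruct (Hopen m) as [HU HV].
  apply (co_difference_open_dense A); [exact Hdense | exact HU | exact HV |].
  intros x Ax. exact (proj1 (HAiff x) Ax m).
Qed.

End OpenDenseFromPi02.

Section BaireApproximation.
Context {E : Type} (t : topology E) (B : set E -> Prop) (ll : set E -> set E -> Prop).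
Hypothesis Hbasis : is_basis t B.
Hypothesis Happrox : approximation_relation B ll.

Lemma basic_inside_open_dense (C U : set E) :
  open_dense t C -> is_open t U -> (exists x, U x) ->
  exists W, B W /\ (exists x, W x) /\ subset W U /\ subset W C.
Proof.
  intros HC HU HUne.
  destruct (HC U HU HUne) as [V [HV [[z Vz] [VU VC]]]].
  destruct (proj2 Hbasis V z HV Vz) as [W [BW [Wz WV]]].
  exists W. repeat split; [exact BW | exists z; exact Wz | |];
    intros y Wy; [apply VU | apply VC]; apply WV, Wy.
Qed.

Lemma approximant_inside_open_dense (C W : set E) :
  open_dense t C -> B W -> (exists x, W x) ->
  exists W', B W' /\ (exists x, W' x) /\ ll W W' /\ subset W' C.
Proof.
  destruct Happrox as [Hshrink [Hmono [Hlocal _]]].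
  intros HC BW HWne.
  destruct (basic_inside_open_dense C W HC (proj1 Hbasis W BW) HWne)
    as [W0 [BW0 [[z W0z] [W0W W0C]]]].
  destruct (Hlocal W0 z BW0 W0z) as [W' [BW' [W'z HW0W']]].
  exists W'. repeat split.
  - exact BW'.
  - exists z. exact W'z.
  - exact (Hmono W0 W' W BW0 BW' BW W0W HW0W').
  - intros y W'y. apply W0C, (Hshrink W0 W' BW0 BW' HW0W'), W'y.
Qed.

Lemma baire_open_dense (G : nat -> set E) :
  (forall k, open_dense t (G k)) ->
  forall U, is_open t U -> (exists x, U x) -> exists x, U x /\ forall k, G k x.
Proof.
  intros HG U HU HUne.
  destruct (basic_inside_open_dense (G 0) U (HG 0) HU HUne)
    as [W0 [BW0 [HW0ne [W0U W0G]]]].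
  destruct (dependent_choice (fun W => B W /\ exists x, W x)
              (fun k W W' => ll W W' /\ subset W' (G (S k))))
    with (x0 := W0) as [Ws [HWs0 HWs]]; [| split; assumption |].
  { intros k W [BW HWne].
    destruct (approximant_inside_open_dense (G (S k)) W (HG (S k)) BW HWne)
      as [W' [BW' [HW'ne [HWW' W'G]]]].
    exists W'. repeat split; assumption. }
  destruct (proj2 (proj2 (proj2 Happrox)) Ws
              (fun n => proj1 (proj1 (HWs n))) (fun n => proj1 (proj2 (HWs n))))
    as [x Hx].
  assert (W0x : W0 x) by (rewrite <- HWs0; apply Hx).
  exists x. split; [apply W0U, W0x |].
  intros [|k]; [apply W0G, W0x | apply (proj2 (proj2 (HWs k))), Hx].
Qed.

End BaireApproximation.

Theorem theorem3p13 (E : Type) (t : topology E) :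
  approximation_space t ->
  (exists B, is_basis t B /\ well_orderable B) ->
  forall A : nat -> set E,
    (forall n, Pi02 t (A n) /\ dense t (A n)) ->
    dense t (fun x => forall n, A n x).
Proof.
  intros [B [ll [Hbasis Happrox]]] _ A HA.
  destruct (countable_intersections_merge (open_dense t) A) as [G [HG HAG]].
  { intro n. apply dense_Pi02_open_dense_intersection; apply HA. }
  intros U HU HUne.
  destruct (baire_open_dense t B ll Hbasis Happrox G HG U HU HUne) as [x [Ux Gx]].
  exists x. split; [exact Ux | apply HAG, Gx].
Qed.
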